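(* In the poset $\textsf{Star}(n)$: the identity permutation $(1)(2)\cdots(n)$ is the unique maximal element; the minimal elements are exactly the $n$-cycles, so there are $(n-1)!$ of them; and $\textsf{Star}(n)$ is graded, every maximal chain having exactly $n$ elements.
   Context: $\mathfrak{S}_n$ is the symmetric group on $[n]$, products taken right to left; cycles include fixed points. For a pivot $k\in[n]$, a star factorization of $\pi$ is $\pi=g_1\cdots g_r$ with each $g_i$ a transposition $(k\ i)$, $i\neq k$; it is transitive if all $(k\ i)$, $i\in[n]\setminus\{k\}$, occur; $\star_k(\pi)$ is the set of transitive star factorizations of $\pi$ of minimum length $n+m-2$ ($m$ = number of cycles of $\pi$). $\sigma\preceq_k\pi$ means some $\gamma\in\star_k(\sigma)$ is a not necessarily contiguous subword of some $\delta\in\star_k(\pi)$. This relation does not depend on $k$; it is denoted $\preceq$, and $\textsf{Star}(n)$ is the resulting poset on $\mathfrak{S}_n$. *)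

From mathcomp Require Import all_boot all_order all_fingroup.
Set Implicit Arguments. Unset Strict Implicit. Unset Printing Implicit Defensive.

(* A star word with pivot k is a list of indices [i1; ...; ir]; it denotes the
   sequence of transpositions g_j = (k i_j).  Words are compared as sequences of
   indices (equivalent to comparing transposition words, since i <> k). *)

(* Product g1 g2 ... gr taken right to left, i.e. the permutation
   x |-> g1 (g2 ( ... (gr x))).  MathComp's (s * t) x = t (s x), so this is
   the MathComp product of the reversed list. *)
Definition star_prod n (k : 'I_n) (w : seq 'I_n) : 'S_n :=
  (\prod_(i <- rev w) tperm k i)%g.

(* number of cycles of pi, fixed points included *)
Definition ncycles n (p : 'S_n) : nat := #|porbits p|.

Definition trans_star_fact n (k : 'I_n) (p : 'S_n) (w : seq 'I_n) : bool :=
  [&& all (fun i => i != k) w,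
      [forall i : 'I_n, (i != k) ==> (i \in w)] &
      star_prod k w == p].

Definition in_star n (k : 'I_n) (p : 'S_n) (w : seq 'I_n) : bool :=
  trans_star_fact k p w && (size w == n + ncycles p - 2).

Definition star_le n (k : 'I_n) (s p : 'S_n) : Prop :=
  exists g d, [/\ in_star k s g, in_star k p d & subseq g d].

Definition star_maximal n (k : 'I_n) (p : 'S_n) : Prop :=
  forall s, star_le k p s -> s = p.

Definition star_minimal n (k : 'I_n) (p : 'S_n) : Prop :=
  forall s, star_le k s p -> s = p.

Definition is_ncycle n (p : 'S_n) : bool :=
  [exists x, porbit p x == [set: 'I_n]].

Definition star_chain n (k : 'I_n) (C : {set 'S_n}) : Prop :=
  forall s p, s \in C -> p \in C -> star_le k s p \/ star_le k p s.

Definition star_maximal_chain n (k : 'I_n) (C : {set 'S_n}) : Prop :=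
  star_chain k C /\ forall D : {set 'S_n}, star_chain k D -> C \subset D -> D = C.

(* Write wprod k w for the product of the star transpositions (k i), i in w,
   in MathComp's composition order, so that star_prod k w = (wprod k w)^-1.
   The key fact (star_le_splits) is that sigma <= pi holds exactly when pi^-1
   arises from sigma^-1 by successively splitting cycles, i.e. by left
   multiplications with transpositions (x y), x and y in a common cycle:
   - inserting a letter into a covering star word multiplies its product by an
     arbitrary transposition (wprod_insert), and deleting letters removes as
     many transpositions (wprod_subseq);
   - since a transposition changes the number of cycles by exactly one, word
     lengths n + #cycles - 2 force every inserted transposition to split;
   - minimum words exist: list an n-cycle below the target as its orbit of k,
     then insert one letter per splitting step (min_star_word).
   Hence Star(n) is graded by the number of cycles, with the identity on top
   and the rank-1 elements (n-cycles) at the bottom. *)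
From mathcomp Require Import all_boot all_order all_fingroup zify.
Set Implicit Arguments. Unset Strict Implicit. Unset Printing Implicit Defensive.

Section GradedPoset.
Variables (T : finType) (le : T -> T -> Prop) (rank : T -> nat) (top : T) (N : nat).
Hypothesis le_refl : forall s, le s s.
Hypothesis le_trans : forall s p q, le s p -> le p q -> le s q.
Hypothesis le_rank : forall s p, le s p -> s = p \/ rank s < rank p.
Hypothesis le_top : forall s, le s top.
Hypothesis rank_top : rank top = N.
Hypothesis rank_gt0 : forall s, 0 < rank s.
Hypothesis le_down : forall p, 1 < rank p -> exists2 s, le s p & rank p = (rank s).+1.
Hypothesis le_cover : forall s p, le s p -> s <> p ->
  exists2 t, le s t /\ le t p & rank p = (rank t).+1.

Definition chain (D : {set T}) : Prop :=
  forall s p, s \in D -> p \in D -> le s p \/ le p s.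

Definition maximal_chain (C : {set T}) : Prop :=
  chain C /\ forall D, chain D -> C \subset D -> D = C.

Lemma le_eq_rank s p : le s p -> rank p <= rank s -> s = p.
Proof. by case/le_rank=> // lt_sp le_ps; have := leq_trans lt_sp le_ps; rewrite ltnn. Qed.

Lemma rank_le s : rank s <= N.
Proof. by rewrite -rank_top; case: (le_rank (le_top s)) => [->|/ltnW]. Qed.

Lemma top_maximal s : le top s -> s = top.
Proof. by move=> top_s; apply/esym/(le_eq_rank top_s); rewrite rank_top rank_le. Qed.

Lemma maximal_top p : (forall s, le p s -> s = p) -> p = top.
Proof. by move=> p_max; apply/esym/p_max. Qed.

Lemma minimalP p : (forall s, le s p -> s = p) <-> rank p = 1.
Proof.
split=> [p_min | p1 s sp]; last by apply: le_eq_rank; rewrite // p1 rank_gt0.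
case: (ltngtP (rank p) 1) => [| /le_down[s /p_min-> /n_Sn] //|//].
by rewrite ltnNge rank_gt0.
Qed.

Lemma chain_le D s p : chain D -> s \in D -> p \in D -> rank s <= rank p -> le s p.
Proof.
by move=> chD sD pD sp; case: (chD s p sD pD) => // /le_eq_rank/(_ sp)->.
Qed.

Section MaximalChain.
Variable C : {set T}.
Hypothesis maxC : maximal_chain C.

Lemma chain_absorb t : (forall z, z \in C -> le z t \/ le t z) -> t \in C.
Proof.
move=> t_cmp; have chtC : chain (t |: C).
  move=> s p; rewrite !inE => /predU1P[-> | sC] /predU1P[-> | pC]; first by left.
  - by case: (t_cmp p pC); [right | left].
  - exact: t_cmp.
  exact: maxC.1.
by rewrite -(maxC.2 _ chtC (subsetUr _ _)) setU11.
Qed.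

Lemma top_in_chain : top \in C.
Proof. by apply: chain_absorb => z _; left. Qed.

Lemma chain_step_down x : x \in C -> 1 < rank x ->
  exists2 t, t \in C & rank x = (rank t).+1.
Proof.
move=> xC x_gt1.
have [t [tx xt below]] : exists t, [/\ le t x, rank x = (rank t).+1
    & forall z, z \in C -> rank z < rank x -> le z t].
  pose L := [set z in C | rank z < rank x].
  have [L0 | [y0 y0L]] := set_0Vmem L.
    have [t tx xt] := le_down x_gt1; exists t; split=> // z zC zx.
    by have := in_set0 z; rewrite -L0 inE zC zx.
  have [y /setIdP[yC yx] y_max] := arg_maxnP rank y0L.
  have yx_neq : y <> x by move=> yxE; rewrite yxE ltnn in yx.
  have [t [yt tx] xt] := le_cover (chain_le maxC.1 yC xC (ltnW yx)) yx_neq.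
  exists t; split=> // z zC zx; apply: le_trans yt.
  have zL : z \in L by rewrite inE zC zx.
  exact: chain_le maxC.1 zC yC (y_max z zL).
exists t => //; apply: chain_absorb => z zC.
case: (ltnP (rank z) (rank x)) => [zx | xz]; first by left; apply: below.
by right; apply: le_trans tx (chain_le maxC.1 xC zC xz).
Qed.

Lemma chain_rank_surj r : 0 < r <= N -> exists2 x, x \in C & rank x = r.
Proof.
move=> /andP[r_gt0 r_le]; have [m] := ubnP (N - r).
elim: m r r_gt0 r_le => // m IH r r_gt0 r_le r_lt.
have [->|r_neq] := eqVneq r N; first by exists top; rewrite ?top_in_chain.
have [x xC xr] : exists2 x, x \in C & rank x = r.+1 by apply: IH; lia.
have [|t tC tx] := chain_step_down xC; first lia.
by exists t => //; lia.
Qed.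

Lemma chain_rank_inj : {in C &, injective rank}.
Proof.
move=> s p sC pC sp; apply: le_eq_rank; last by rewrite sp.
by apply: chain_le maxC.1 sC pC _; rewrite sp.
Qed.

Lemma maximal_chain_card : #|C| = N.
Proof.
have ranks_uniq : uniq [seq rank x | x <- enum C].
  rewrite map_inj_in_uniq ?enum_uniq // => s p.
  by rewrite !mem_enum; apply: chain_rank_inj.
have ranksE : [seq rank x | x <- enum C] =i iota 1 N.
  move=> r; rewrite mem_iota add1n ltnS; apply/mapP/idP => [[x _ ->] | r_rng].
    by rewrite rank_gt0 rank_le.
  by have [x xC <-] := chain_rank_surj r_rng; exists x; rewrite ?mem_enum.
have := perm_size (uniq_perm ranks_uniq (iota_uniq 1 N) ranksE).
by rewrite size_map size_iota -cardE.
Qed.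

End MaximalChain.
End GradedPoset.

Section CycleCount.
Variable n : nat.
Implicit Types (a b : 'S_n) (x y : 'I_n).

Lemma ncyclesV a : ncycles a^-1 = ncycles a.
Proof. by rewrite /ncycles porbitsV. Qed.

Lemma ncycles_gt0 a : 0 < n -> 0 < ncycles a.
Proof.
by case: n a => // m a _; apply/card_gt0P; exists (porbit a ord0); apply: imset_f.
Qed.

Lemma ncycles_le a : ncycles a <= n.
Proof. by rewrite (leq_trans (leq_imset_card _ _)) // card_ord. Qed.

Lemma ncycles1 : ncycles (1%g : 'S_n) = n.
Proof.
have orbit1 x : porbit 1%g x = [set x].
  apply/setP=> y; rewrite inE; apply/porbitP/eqP => [[i ->]|->].
    by rewrite expg1n perm1.
  by exists 0; rewrite expg0 perm1.
rewrite /ncycles /porbits card_imset ?card_ord // => x y.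
by rewrite !orbit1 => /set1_inj.
Qed.

Lemma is_ncycleP a x : reflect (porbit a x = [set: 'I_n]) (is_ncycle a).
Proof.
apply: (iffP existsP) => [[y /eqP ay] | ax]; last by exists x; rewrite ax.
by rewrite -ay; apply/eqP; rewrite eq_porbit_mem ay inE.
Qed.

Lemma ncycles1P a x : reflect (ncycles a = 1) (is_ncycle a).
Proof.
have n_gt0 : 0 < n by apply: leq_ltn_trans (ltn_ord x).
apply: (iffP (is_ncycleP a x)) => [ax | /eqP/cards1P[O aO]].
  apply/eqP; rewrite eqn_leq ncycles_gt0 // andbT -(cards1 (porbit a x)).
  apply/subset_leq_card/subsetP => _ /imsetP[y _ ->]; rewrite inE.
  by rewrite eq_porbit_mem ax inE.
apply/setP => y; rewrite inE.
have /[!aO] /set1P Oy : porbit a y \in porbits a by apply: imset_f.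
have /[!aO] /set1P Ox : porbit a x \in porbits a by apply: imset_f.
by rewrite Ox -Oy porbit_id.
Qed.

(* Multiplying by a transposition (x y) splits a cycle when x, y lie in the
   same cycle and merges two cycles otherwise. *)
Lemma ncycles_mul_tperm a x y :
  ncycles (tperm x y * a)%g + (x \notin porbit a y).*2 = ncycles a + (x != y).
Proof. exact: porbits_mul_tperm. Qed.

Lemma ncycles_split a x y : x != y -> x \in porbit a y ->
  ncycles (tperm x y * a)%g = (ncycles a).+1.
Proof. by move=> xy xa; have := ncycles_mul_tperm a x y; rewrite xa xy /=; lia. Qed.

Lemma ncycles_merge a x y : x \notin porbit a y ->
  (ncycles (tperm x y * a)%g).+1 = ncycles a.
Proof.
move=> xa; have xy : x != y by apply: contraNneq xa => ->; apply: porbit_id.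
by have := ncycles_mul_tperm a x y; rewrite xa xy /=; lia.
Qed.

Lemma ncycles_tperm_le a x y : ncycles (tperm x y * a)%g <= (ncycles a).+1.
Proof. by have := ncycles_mul_tperm a x y; case: (x != y); case: (x \in _) => /=; lia. Qed.

Lemma ncycles_tperm_gt a x y : (ncycles a).+1 <= ncycles (tperm x y * a)%g ->
  (x != y) && (x \in porbit a y).
Proof. by have := ncycles_mul_tperm a x y; case: (x != y); case: (x \in _) => /=; lia. Qed.

End CycleCount.

Inductive splits n (a : 'S_n) : 'S_n -> Prop :=
| splits_refl : splits a a
| splits_step b x y : splits a b -> x != y -> x \in porbit b y ->
    splits a (tperm x y * b)%g.

Section SplitChains.
Variable n : nat.
Implicit Types (a b c : 'S_n) (x y : 'I_n).

Lemma splits_trans a b c : splits a b -> splits b c -> splits a c.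
Proof. by move=> ab; elim=> // d x y _ IH xy xd; apply: splits_step. Qed.

Lemma splits_ncycles a b : splits a b -> a = b \/ ncycles a < ncycles b.
Proof.
elim=> [|c x y _ IH xy xc]; first by left.
by right; rewrite ncycles_split //; case: IH => [->|]; lia.
Qed.

Lemma splits_last a b : splits a b -> a <> b ->
  exists2 c, splits a c /\ splits c b & ncycles b = (ncycles c).+1.
Proof.
case=> [//|c x y ac xy xc] _; exists c; last by rewrite ncycles_split.
by split=> //; apply: splits_step (splits_refl c) _ _.
Qed.

Lemma splits_down a : 1 < ncycles a ->
  exists2 b, splits b a & ncycles a = (ncycles b).+1.
Proof.
move=> /card_gt1P[_ [_ [/imsetP[x _ ->] /imsetP[y _ ->] xy]]].
have {xy} xa : x \notin porbit a y by rewrite -eq_porbit_mem.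
set b := (tperm x y * a)%g; have ab : a = (tperm x y * b)%g.
  by rewrite /b mulgA tperm2 mul1g.
have ncb := ncycles_merge xa; rewrite -/b in ncb.
exists b; last by [].
have /andP[xy xb] : (x != y) && (x \in porbit b y).
  by apply: ncycles_tperm_gt; rewrite -ab ncb.
by rewrite ab; apply: splits_step (splits_refl b) _ _.
Qed.

Lemma splits_from_ncycle a : 0 < n -> exists2 b, ncycles b = 1 & splits b a.
Proof.
move=> n_gt0; have [m] := ubnP (ncycles a); elim: m a => // m IH a.
case: (ltnP 1 (ncycles a)) => [a_gt1 a_lt|a_le1 _].
  have [b ba ab] := splits_down a_gt1.
  have [|c c1 cb] := IH b; first lia.
  by exists c => //; apply: splits_trans cb ba.
by exists a; [have := ncycles_gt0 a n_gt0; lia | apply: splits_refl].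
Qed.

Lemma splits_to1 a : splits a 1%g.
Proof.
have [m] := ubnP (n - ncycles a); elim: m a => // m IH a a_lt.
have [->|a1] := eqVneq a 1%g; first exact: splits_refl.
have [x ax] : exists x, a x != x.
  apply/existsP; apply: contraNT a1 => /existsPn a_fix.
  by apply/eqP/permP => x; rewrite perm1; apply/eqP/negPn.
have xax : x != a x by rewrite eq_sym.
have xa : x \in porbit a (a x).
  by rewrite porbit_sym -{1}(expg1 a); apply: mem_porbit.
apply: splits_trans (splits_step (splits_refl a) xax xa) (IH _ _).
by have := ncycles_le (tperm x (a x) * a)%g; rewrite ncycles_split //; lia.
Qed.

End SplitChains.

(* The product of the star transpositions (k i) of a word w, composed in
   MathComp's order (left factor applied first); star_prod k w is its inverse. *)
Definition wprod n (k : 'I_n) (w : seq 'I_n) : 'S_n := (\prod_(i <- w) tperm k i)%g.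

Definition tprod n (ts : seq ('I_n * 'I_n)) : 'S_n := (\prod_(t <- ts) tperm t.1 t.2)%g.

Definition covers n (k : 'I_n) (w : seq 'I_n) : Prop := forall i, i != k -> i \in w.

Notation avoids k w := (all (fun i => i != k) w).

Section StarWords.
Variables (n : nat) (k : 'I_n).
Implicit Types (a b : 'S_n) (x y z : 'I_n) (u v w g d : seq 'I_n).

Lemma wprod_nil : wprod k [::] = 1%g.
Proof. by rewrite /wprod big_nil. Qed.

Lemma wprod_cons z w : wprod k (z :: w) = (tperm k z * wprod k w)%g.
Proof. by rewrite /wprod big_cons. Qed.

Lemma wprod_cat u v : wprod k (u ++ v) = (wprod k u * wprod k v)%g.
Proof. by rewrite /wprod big_cat. Qed.

Lemma wprod_consE z w x : wprod k (z :: w) x = wprod k w (tperm k z x).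
Proof. by rewrite wprod_cons permM. Qed.

Lemma star_prodE w : star_prod k w = (wprod k w)^-1%g.
Proof.
elim: w => [|z w IH]; first by rewrite /star_prod /wprod !big_nil invg1.
rewrite /star_prod rev_cons -cats1 big_cat big_seq1 /= -/(star_prod k w) IH.
by rewrite wprod_cons invMg tpermV.
Qed.

Lemma wprod_fix w x : x != k -> x \notin w -> wprod k w x = x.
Proof.
move=> xk; elim: w => [|z w IH]; first by rewrite wprod_nil perm1.
by rewrite inE negb_or => /andP[xz xw]; rewrite wprod_consE tpermD 1?eq_sym ?IH.
Qed.

Lemma prefix_to_pivot g x : covers k g ->
  exists u v, g = u ++ v /\ wprod k u x = k.
Proof.
move=> gk; have [->|xk] := eqVneq x k.
  by exists [::], g; rewrite wprod_nil perm1.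
have xg := gk x xk; have : x \notin take (index x g) g by rewrite in_take // ltnn.
case/path.splitP: xg => u v xu; exists (rcons u x), v; split=> //.
by rewrite -cats1 wprod_cat permM (wprod_fix xk xu) wprod_cons wprod_nil mulg1 tpermR.
Qed.

Lemma wprod_insert g x y : avoids k g -> covers k g -> x != y ->
  exists d, [/\ subseq g d, size d = (size g).+1, avoids k d
              & wprod k d = (tperm x y * wprod k g)%g].
Proof.
move=> gk gcov xy; have [u [v [gE ux]]] := prefix_to_pivot x gcov; subst g.
set z := wprod k u y; have zk : z != k by rewrite -ux (inj_eq perm_inj) eq_sym.
exists (u ++ z :: v); split.
- by rewrite cat_subseq ?subseq_refl ?subseq_cons.
- by rewrite !size_cat /= addnS.
- by move: gk; rewrite !all_cat /= zk.
have tkz : tperm k z = (tperm x y ^ wprod k u)%g by rewrite tpermJ ux.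
by rewrite !wprod_cat wprod_cons tkz /conjg !mulgA mulgV mul1g.
Qed.

Lemma tprod_cons (t : 'I_n * 'I_n) ts : tprod (t :: ts) = (tperm t.1 t.2 * tprod ts)%g.
Proof. by rewrite /tprod big_cons. Qed.

Lemma tprod_conj (s : 'S_n) ts :
  tprod [seq (s t.1, s t.2) | t <- ts] = (tprod ts ^ s)%g.
Proof.
elim: ts => [|t ts IH]; first by rewrite /tprod !big_nil conj1g.
by rewrite /= !tprod_cons IH conjMg tpermJ.
Qed.

Lemma wprod_subseq g d : subseq g d ->
  exists ts, wprod k d = (tprod ts * wprod k g)%g /\ size d = size g + size ts.
Proof.
case/subseqP=> m + ->{g}; elim: d m => [|z d IH] [|b m] //=.
  by exists [::]; rewrite /tprod big_nil mul1g.
move=> /eqP; rewrite eqSS => /eqP/IH[ts [dE dsz]].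
case: b.
  exists [seq (tperm k z t.1, tperm k z t.2) | t <- ts].
  rewrite size_map /= dsz tprod_conj !wprod_cons dE /conjg tpermV !mulgA.
  by rewrite -[(_ * tperm k z * tperm k z)%g]mulgA tperm2 mulg1.
exists ((k, z) :: ts); rewrite tprod_cons wprod_cons dE mulgA /= dsz; split=> //.
by rewrite addnS.
Qed.

End StarWords.

Section TransProducts.
Variable n : nat.
Implicit Types (a : 'S_n) (ts : seq ('I_n * 'I_n)).

Lemma tprod_ncycles_le ts a : ncycles (tprod ts * a)%g <= ncycles a + size ts.
Proof.
elim: ts => [|t ts IH]; first by rewrite /tprod big_nil mul1g addn0.
by rewrite tprod_cons -mulgA (leq_trans (ncycles_tperm_le _ _ _)) //= addnS ltnS.
Qed.

Lemma tprod_splits ts a : ncycles a + size ts <= ncycles (tprod ts * a)%g ->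
  splits a (tprod ts * a)%g.
Proof.
elim: ts => [|t ts IH]; first by rewrite /tprod big_nil mul1g => _; apply: splits_refl.
rewrite tprod_cons -mulgA [size _]/= addnS => gain.
have le1 := tprod_ncycles_le ts a.
have le2 := ncycles_tperm_le (tprod ts * a)%g t.1 t.2.
have /andP[t12 t1a] := ncycles_tperm_gt (leq_ltn_trans le1 gain).
by apply: splits_step => //; apply: IH; rewrite -ltnS (leq_trans gain le2).
Qed.

End TransProducts.

Section CycleWords.
Variables (n : nat) (k : 'I_n).
Implicit Types (b : 'S_n) (w : seq 'I_n).

(* For a repetition-free word w avoiding k, wprod k w is the cycle
   k -> w_0 -> w_1 -> ... -> w_last -> k (the default k of nth w closes it). *)
Lemma wprod_nth w i : uniq (k :: w) -> i <= size w ->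
  wprod k w (nth k (k :: w) i) = nth k w i.
Proof.
elim: w i => [|z w IH] i; first by rewrite leqn0 => _ /eqP->; rewrite wprod_nil perm1.
rewrite cons_uniq => /andP[]; rewrite inE negb_or => /andP[kz kw] /andP[zw uw].
have ukw : uniq (k :: w) by rewrite /= kw.
case: i => [|[|i]] i_le; rewrite wprod_consE.
- by rewrite tpermL wprod_fix // eq_sym.
- by rewrite tpermR (IH 0).
have wi : nth k w i \in w by rewrite mem_nth.
rewrite [nth _ (k :: _) _]/= tpermD ?(IH i.+1) //.
  by apply: contraNneq kw => ->.
by apply: contraNneq zw => ->.
Qed.

Lemma wprod_iter w i : uniq (k :: w) -> i <= (size w).+1 ->
  iter i (wprod k w) k = nth k (k :: w) i.
Proof.
move=> uw; elim: i => [//|i IH] i_le.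
by rewrite iterS IH 1?ltnW // wprod_nth.
Qed.

Lemma full_word w x : uniq (k :: w) -> size w = n.-1 -> x \in k :: w.
Proof.
move=> uw w_size; apply: contraT => xw.
have := max_card (mem (x :: k :: w)).
rewrite (card_uniqP _) ?card_ord /= ?w_size; last by rewrite [uniq _]/= xw.
by have := ltn_ord k; lia.
Qed.

Lemma wprod_porbit w : uniq (k :: w) -> size w = n.-1 ->
  porbit (wprod k w) k = [set: 'I_n].
Proof.
move=> uw w_size; apply/setP => x; rewrite inE.
have xw := full_word x uw w_size.
rewrite -(nth_index k xw) -wprod_iter 1?ltnW ?index_mem // -permX.
exact: mem_porbit.
Qed.

Lemma wprod_traject w : uniq (k :: w) ->
  w = traject (wprod k w) (wprod k w k) (size w).
Proof.
move=> uw; apply: (@eq_from_nth _ k); first by rewrite size_traject.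
move=> i i_lt; rewrite [RHS](set_nth_default (wprod k w k)) ?size_traject //.
by rewrite nth_traject // -iterSr wprod_iter // ltnW.
Qed.

Lemma ncycle_wprod b : porbit b k = [set: 'I_n] ->
  uniq (k :: traject b (b k) n.-1) /\ wprod k (traject b (b k) n.-1) = b.
Proof.
move=> bk; have n_gt0 : 0 < n by apply: leq_ltn_trans (ltn_ord k).
have card_bk : #|porbit b k| = n by rewrite bk cardsT card_ord.
have tr : k :: traject b (b k) n.-1 = traject b k n by rewrite -trajectS prednK.
have uw : uniq (k :: traject b (b k) n.-1).
  by rewrite tr; have := uniq_traject_porbit b k; rewrite card_bk.
split=> //; apply/permP => x.
have : x \in traject b k n by have := porbit_traject b k x; rewrite card_bk bk inE.
case/trajectP => i i_lt ->.
have orbit_nth j : j <= n -> iter j b k = nth k (k :: traject b (b k) n.-1) j.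
  rewrite tr leq_eqVlt => /orP[/eqP->|j_lt]; last by rewrite nth_traject.
  by rewrite nth_default ?size_traject //; have := iter_porbit b k; rewrite card_bk.
have i_le : i <= n.-1 by rewrite -ltnS prednK.
rewrite orbit_nth 1?ltnW // wprod_nth ?size_traject //.
by rewrite -orbit_nth 1?ltnW // -iterS orbit_nth.
Qed.

End CycleWords.

Section StarOrder.
Variables (n : nat) (k : 'I_n).
Implicit Types (a b s p : 'S_n) (g d : seq 'I_n).

Let n_gt0 : 0 < n. Proof. exact: leq_ltn_trans (ltn_ord k). Qed.

Lemma covers_subseq g d : subseq g d -> covers k g -> covers k d.
Proof. by move=> gd gk i /gk; apply: mem_subseq. Qed.

Lemma wprod_extend a b : splits a b -> forall g,
  avoids k g -> covers k g -> wprod k g = a ->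
  exists d, [/\ subseq g d, avoids k d, wprod k d = b
              & size d + ncycles a = size g + ncycles b].
Proof.
elim=> [|c x y _ IH xy xc] g gk gcov ga; first by exists g; split.
have [d [gd dk dc dsize]] := IH g gk gcov ga.
have [d' [dd' d'size d'k d'c]] := wprod_insert dk (covers_subseq gd gcov) xy.
exists d'; split=> //; first exact: subseq_trans gd dd'.
  by rewrite d'c dc.
by rewrite ncycles_split // d'size addSn dsize addnS.
Qed.

(* Every permutation has a covering star word of length n + ncycles - 2:
   write an n-cycle below it as its orbit word and extend along splits. *)
Lemma min_star_word a : exists g,
  [/\ avoids k g, covers k g, wprod k g = a & size g = n + ncycles a - 2].
Proof.
have [b b1 ba] := splits_from_ncycle a n_gt0.
have bk : porbit b k = [set: 'I_n] by apply/(is_ncycleP b k)/(ncycles1P b k).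
have [uw bw] := ncycle_wprod bk.
set w := traject b (b k) n.-1 in uw bw.
have wk : avoids k w.
  by apply/allP => i iw; move: uw; rewrite cons_uniq => /andP[+ _]; apply: contraNneq => <-.
have wcov : covers k w.
  move=> i ik; have := full_word i uw; rewrite size_traject => /(_ erefl).
  by rewrite inE (negbTE ik).
have [d [wd dk da dsize]] := wprod_extend ba wk wcov bw.
exists d; split=> //; first exact: covers_subseq wd wcov.
by move: dsize; rewrite b1 size_traject; lia.
Qed.

Lemma in_starP p g : in_star k p g <->
  [/\ avoids k g, covers k g, wprod k g = p^-1%g & size g = n + ncycles p - 2].
Proof.
rewrite /in_star /trans_star_fact star_prodE -(inj_eq invg_inj) invgK.
split=> [/andP[/and3P[gk /forallP gcov /eqP gp] /eqP gsize] | [gk gcov gp gsize]].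
  by split=> // i ik; move/implyP: (gcov i); apply.
rewrite gk gp gsize !eqxx !andbT; apply/forallP => i; apply/implyP/gcov.
Qed.

Lemma star_le_splits s p : star_le k s p <-> splits s^-1 p^-1.
Proof.
have cs_gt0 := ncycles_gt0 s n_gt0; have cp_gt0 := ncycles_gt0 p n_gt0.
split=> [[g [d [/in_starP[_ _ gs gsize] /in_starP[_ _ dp dsize] gd]]] | sp].
  have [ts [dg dgsize]] := wprod_subseq k gd.
  have ps : p^-1%g = (tprod ts * s^-1)%g by rewrite -dp dg gs.
  by rewrite ps; apply: tprod_splits; rewrite -ps !ncyclesV; lia.
have [g [gk gcov gs gsize]] := min_star_word s^-1.
have [d [gd dk dp dsize]] := wprod_extend sp gk gcov gs.
exists g, d; split=> //; apply/in_starP; split=> //.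
- by rewrite gsize ncyclesV.
- exact: covers_subseq gd gcov.
by move: gsize dsize; rewrite !ncyclesV; lia.
Qed.

Lemma star_le_refl s : star_le k s s.
Proof. by apply/star_le_splits/splits_refl. Qed.

Lemma star_le_trans s p q : star_le k s p -> star_le k p q -> star_le k s q.
Proof.
move=> /star_le_splits sp /star_le_splits pq.
by apply/star_le_splits/(splits_trans sp).
Qed.

Lemma star_le_rank s p : star_le k s p -> s = p \/ ncycles s < ncycles p.
Proof.
case/star_le_splits/splits_ncycles => [/invg_inj-> | ]; first by left.
by rewrite !ncyclesV; right.
Qed.

Lemma star_le_top s : star_le k s 1%g.
Proof. by apply/star_le_splits; rewrite invg1; apply: splits_to1. Qed.

Lemma star_le_down p : 1 < ncycles p ->
  exists2 s, star_le k s p & ncycles p = (ncycles s).+1.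
Proof.
rewrite -ncyclesV => /splits_down[b bp pb]; exists b^-1%g.
  by apply/star_le_splits; rewrite invgK.
by rewrite (ncyclesV b) -pb ncyclesV.
Qed.

Lemma star_le_cover s p : star_le k s p -> s <> p ->
  exists2 t, star_le k s t /\ star_le k t p & ncycles p = (ncycles t).+1.
Proof.
move=> /star_le_splits sp s_neq; have [|c [sc cp] pc] := splits_last sp.
  by move/invg_inj.
exists c^-1%g; last by rewrite (ncyclesV c) -pc ncyclesV.
by split; apply/star_le_splits; rewrite invgK.
Qed.

End StarOrder.

(* n-cycles correspond bijectively, via wprod k, to the orderings of the
   n - 1 letters other than k; hence there are (n - 1)! of them. *)
Lemma card_ncycles n (k : 'I_n) : #|[set p : 'S_n | is_ncycle p]| = n.-1`!.
Proof.
pose S := [set t : n.-1.-tuple 'I_n | all (predC1 k) t & uniq t].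
have S_uniq t : t \in S -> uniq (k :: t).
  by rewrite inE cons_uniq => /andP[/allP tk ->]; rewrite andbT; apply/negP => /tk/eqP.
have -> : [set p : 'S_n | is_ncycle p] = (fun t : n.-1.-tuple 'I_n => wprod k t) @: S.
  apply/setP => p; rewrite inE; apply/idP/imsetP => [/(is_ncycleP p k) pk | [t tS ->]].
    have [uw pw] := ncycle_wprod pk.
    have w_size : size (traject p (p k) n.-1) == n.-1 by rewrite size_traject.
    exists (Tuple w_size); last by rewrite pw.
    move: uw; rewrite inE cons_uniq => /andP[kw ->]; rewrite andbT.
    by apply/allP => i iw /=; apply: contraNneq kw => ik; rewrite -{1}ik.
  by apply/(is_ncycleP (wprod k t) k)/wprod_porbit; rewrite ?S_uniq ?size_tuple.
rewrite card_in_imset => [|t1 t2 t1S t2S t12]; last first.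
  apply: val_inj; rewrite /= (wprod_traject (S_uniq _ t1S)).
  by rewrite (wprod_traject (S_uniq _ t2S)) t12 !size_tuple.
by rewrite card_uniq_tuples cardC1 card_ord ffactnn.
Qed.

Theorem mainTheorem12 (n : nat) (k : 'I_n) :
  [/\ star_maximal k (1%g : 'S_n),
      (forall p : 'S_n, star_maximal k p -> p = 1%g),
      (forall p : 'S_n, star_minimal k p <-> is_ncycle p),
      #|[set p : 'S_n | is_ncycle p]| = (n.-1)`! &
      (forall C : {set 'S_n}, star_maximal_chain k C -> #|C| = n)].
Proof.
have n_gt0 : 0 < n by apply: leq_ltn_trans (ltn_ord k).
have rank_gt0 (p : 'S_n) : 0 < ncycles p by apply: ncycles_gt0.
have le_rank := @star_le_rank n k; have le_top := @star_le_top n k.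
have le_down := @star_le_down n k; have rank_top := ncycles1 n.
split.
- by move=> s; apply: (top_maximal (le := star_le k) le_rank le_top rank_top).
- by move=> p; apply: (maximal_top (le := star_le k) le_top).
- move=> p; apply: iff_trans (minimalP (le := star_le k) le_rank rank_gt0 le_down p) _.
  exact: rwP (ncycles1P p k).
- exact: card_ncycles.
move=> C; apply: (maximal_chain_card (le := star_le k) (@star_le_refl n k)
  (@star_le_trans n k) le_rank le_top rank_top rank_gt0 le_down (@star_le_cover n k)).
Qed.
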